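(* Let $x^{(0)}\in\mathbb R^n$, $h_0:=H(x^{(0)})$, $v_i^{(0)}:=a_1x_1^{(0)}+\dots+a_ix_i^{(0)}$ ($v_0^{(0)}:=0$), and let $x^{(m)}:=\mathcal K^m(x^{(0)})$ be the iterates of the map $\tilde x_i=x_i\dfrac{(1-\epsilon H)(1+\epsilon H)}{(1-\epsilon H+2\epsilon v_{i-1})(1-\epsilon H+2\epsilon v_i)}$. If $h_0\neq0$, then, writing $\rho:=\dfrac{1+\epsilon h_0}{1-\epsilon h_0}$, $$x_i^{(m)}=x_i^{(0)}\frac{\rho^m h_0^2}{\big(h_0+v^{(0)}_{i-1}(\rho^m-1)\big)\big(h_0+v^{(0)}_i(\rho^m-1)\big)},\qquad i=1,\dots,n,$$ and if $h_0=0$, $$x_i^{(m)}=x_i^{(0)}\frac{1}{\big(1+2m\epsilon v^{(0)}_{i-1}\big)\big(1+2m\epsilon v^{(0)}_i\big)},\qquad i=1,\dots,n.$$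
   Context: $(a_1,\dots,a_n)\in\mathbb R^n\setminus\{0\}$, $\epsilon>0$ small, $H=a_1x_1+\dots+a_nx_n$, $v_0:=0$, $v_i:=a_1x_1+\dots+a_ix_i$. (Formulas hold whenever the iterates are defined.) *)

From Stdlib Require Import Reals Lra Lia.
Open Scope R_scope.

(* A vector of R^n is represented as x : nat -> R, with components x 1, ..., x n
   (values at other indices are irrelevant). *)

Fixpoint v (a x : nat -> R) (i : nat) : R :=
  match i with
  | O => 0
  | S k => v a x k + a (S k) * x (S k)
  end.

Definition H (n : nat) (a x : nat -> R) : R := v a x n.

Definition K (n : nat) (a : nat -> R) (eps : R) (x : nat -> R) : nat -> R :=
  fun i => x i * ((1 - eps * H n a x) * (1 + eps * H n a x)) /
           ((1 - eps * H n a x + 2 * eps * v a x (i - 1)) *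
            (1 - eps * H n a x + 2 * eps * v a x i)).

Definition K_defined (n : nat) (a : nat -> R) (eps : R) (x : nat -> R) : Prop :=
  forall i, (1 <= i <= n)%nat ->
    (1 - eps * H n a x + 2 * eps * v a x (i - 1)) *
    (1 - eps * H n a x + 2 * eps * v a x i) <> 0.

Definition Kiter (n : nat) (a : nat -> R) (eps : R) (m : nat) (x0 : nat -> R)
  : nat -> R := Nat.iter m (K n a eps) x0.

From Stdlib Require Import Reals Lra Lia.
Open Scope R_scope.

(* The iterates stay of the shape [x_i c / (q_{i-1} q_i)] with [q_i] affine in
   [v_i(x)]: for such a point [a_i X_i] telescopes, so [v_i(X)] is again a
   Moebius function of [v_i(x)], and every denominator of [K] becomes a ratio
   [q'_i / q_i] of two affine functions of [v_i(x)].  Thus [K] acts on the three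
   parameters [(c, alpha, beta)], and it remains to solve this recursion up to
   the rescaling [(c, alpha, beta) ~ (k^2 c, k alpha, k beta)]. *)

Section OrbitForm.

Variables a x : nat -> R.

Definition affine_v (al be : R) (i : nat) : R := al + v a x i * be.

Definition orbit_form (c al be : R) (i : nat) : R :=
  x i * c / (affine_v al be (i - 1) * affine_v al be i).

Lemma affine_v0 (al be : R) : affine_v al be 0 = al.
Proof. unfold affine_v; simpl; ring. Qed.

Lemma affine_v_scale (k al be : R) (i : nat) :
  affine_v (k * al) (k * be) i = k * affine_v al be i.
Proof. unfold affine_v; ring. Qed.

Lemma orbit_form_scale (k c al be : R) (i : nat) : k <> 0 ->
  orbit_form (k ^ 2 * c) (k * al) (k * be) i = orbit_form c al be i.
Proof.
  intros Hk. unfold orbit_form. rewrite !affine_v_scale.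
  set (A := affine_v al be (i - 1)); set (B := affine_v al be i).
  unfold Rdiv. rewrite !Rinv_mult.
  transitivity (x i * c * (/ A * / B) * (k * / k) ^ 2); [ring|].
  rewrite Rinv_r by exact Hk. ring.
Qed.

(* [a_i X_i = (c / beta) (1 / q_{i-1} - 1 / q_i)] telescopes; the closed form
   below also covers [beta = 0]. *)
Lemma v_orbit_form (X : nat -> R) (c al be : R) (i : nat) :
  al <> 0 ->
  (forall j, (j <= i)%nat -> affine_v al be j <> 0) ->
  (forall j, (1 <= j <= i)%nat -> X j = orbit_form c al be j) ->
  v a X i = c * v a x i / (al * affine_v al be i).
Proof.
  intros Hal. induction i as [|i IH]; intros Hq HX.
  - simpl. unfold affine_v. simpl. field. exact Hal.
  - simpl v. rewrite IH, HX by (intros; try apply Hq; try apply HX; lia).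
    assert (Hi := Hq i ltac:(lia)). assert (HSi := Hq (S i) ltac:(lia)).
    unfold orbit_form, affine_v in *. replace (S i - 1)%nat with i by lia.
    simpl v in *. field. tauto.
Qed.

Section KStep.

Variables (n : nat) (eps c al be : R) (X : nat -> R).

Hypothesis Hal : al <> 0.
Hypothesis Hq : forall j, (j <= n)%nat -> affine_v al be j <> 0.
Hypothesis HX : forall j, (1 <= j <= n)%nat -> X j = orbit_form c al be j.

Let t := 1 - eps * H n a X.
Let be' := be * t + 2 * eps * c / al.

Lemma K_denominator_orbit_form (j : nat) : (j <= n)%nat ->
  1 - eps * H n a X + 2 * eps * v a X j =
  affine_v (al * t) be' j / affine_v al be j.
Proof.
  intros Hj. fold t.
  rewrite (v_orbit_form X c al be j Hal) by (intros; try apply Hq; try apply HX; lia).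
  assert (Hqj := Hq j Hj). unfold be', affine_v in *. field. tauto.
Qed.

Lemma K_orbit_form : (1 <= n)%nat -> K_defined n a eps X ->
  (forall j, (j <= n)%nat -> affine_v (al * t) be' j <> 0) /\
  (forall i, (1 <= i <= n)%nat ->
     K n a eps X i = orbit_form (c * t * (1 + eps * H n a X)) (al * t) be' i).
Proof.
  intros Hn Hdef.
  assert (Hq' : forall j, (j <= n)%nat -> affine_v (al * t) be' j <> 0).
  { intros [|j] Hj.
    - rewrite affine_v0. apply Rmult_integral_contrapositive_currified; [exact Hal|].
      intro Ht. apply (Hdef 1%nat ltac:(lia)). simpl. fold t. rewrite Ht. ring.
    - intro Hz. apply (Hdef (S j) ltac:(lia)).
      rewrite (K_denominator_orbit_form (S j)), Hz by exact Hj. unfold Rdiv. ring. }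
  split; [exact Hq'|].
  intros i Hi. unfold K.
  rewrite !K_denominator_orbit_form, HX by (exact Hi || lia). fold t.
  assert (H1 := Hq (i - 1)%nat ltac:(lia)). assert (H2 := Hq i ltac:(lia)).
  assert (H3 := Hq' (i - 1)%nat ltac:(lia)). assert (H4 := Hq' i ltac:(lia)).
  unfold orbit_form. field. tauto.
Qed.

End KStep.

End OrbitForm.

Definition rho (eps h : R) : R := (1 + eps * h) / (1 - eps * h).

Section Iterates.

Variables (n : nat) (a : nat -> R) (eps : R) (x0 : nat -> R).

Lemma H_orbit_form (X : nat -> R) (c al be : R) :
  al <> 0 ->
  (forall j, (j <= n)%nat -> affine_v a x0 al be j <> 0) ->
  (forall j, (1 <= j <= n)%nat -> X j = orbit_form a x0 c al be j) ->
  H n a X = c * H n a x0 / (al * (al + H n a x0 * be)).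
Proof. intros Hal Hq HX. exact (v_orbit_form a x0 X c al be n Hal Hq HX). Qed.

Hypothesis Hn : (1 <= n)%nat.

Lemma Kiter_orbit_form_nonzero (h : R) (m : nat) :
  H n a x0 = h -> h <> 0 ->
  (forall k, (k < m)%nat -> K_defined n a eps (Kiter n a eps k x0)) ->
  (forall j, (j <= n)%nat -> affine_v a x0 h (rho eps h ^ m - 1) j <> 0) /\
  (forall i, (1 <= i <= n)%nat ->
     Kiter n a eps m x0 i = orbit_form a x0 (rho eps h ^ m * h ^ 2) h (rho eps h ^ m - 1) i).
Proof.
  intros Hxh Hh. induction m as [|m IH]; intros Hdef.
  - split.
    + intros j _. unfold affine_v. simpl. rewrite Rminus_diag, Rmult_0_r, Rplus_0_r. exact Hh.
    + intros i _. unfold orbit_form, affine_v. simpl. field. exact Hh.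
  - destruct IH as [Hq HX]; [intros k Hk; apply Hdef; lia|].
    set (X := Kiter n a eps m x0) in HX.
    set (r := rho eps h ^ m) in Hq, HX.
    assert (Hqn := Hq n (le_n n)). unfold affine_v in Hqn. fold (H n a x0) in Hqn.
    rewrite Hxh in Hqn.
    assert (HXh : H n a X = h).
    { rewrite (H_orbit_form X _ _ _ Hh Hq HX), Hxh.
      (* [q_n = h rho^m], so the invariant also excludes [rho = 0]. *)
      assert (Hr : r <> 0) by (intro E; apply Hqn; rewrite E; ring).
      field. tauto. }
    destruct (K_orbit_form a x0 n eps _ _ _ X Hh Hq HX Hn (Hdef m (Nat.lt_succ_diag_r m)))
      as [Hq' HK].
    rewrite HXh in Hq', HK.
    set (t := 1 - eps * h) in Hq', HK.
    assert (Ht : t <> 0).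
    { intro E. apply (Hq' 0%nat (Nat.le_0_l n)). rewrite affine_v0, E. ring. }
    assert (Hc : r * h ^ 2 * t * (1 + eps * h) = t ^ 2 * (rho eps h ^ S m * h ^ 2)).
    { simpl pow. fold r. unfold rho, t in *. field. exact Ht. }
    assert (Hal : h * t = t * h) by ring.
    assert (Hbe : (r - 1) * t + 2 * eps * (r * h ^ 2) / h = t * (rho eps h ^ S m - 1)).
    { simpl pow. fold r. unfold rho, t in *. field. tauto. }
    rewrite Hal, Hbe in Hq'. rewrite Hc, Hal, Hbe in HK.
    split.
    + intros j Hj Hz. apply (Hq' j Hj). rewrite affine_v_scale, Hz. ring.
    + intros i Hi. rewrite <- (orbit_form_scale a x0 t _ _ _ i Ht). exact (HK i Hi).
Qed.

Lemma Kiter_orbit_form_zero (m : nat) :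
  H n a x0 = 0 ->
  (forall k, (k < m)%nat -> K_defined n a eps (Kiter n a eps k x0)) ->
  (forall j, (j <= n)%nat -> affine_v a x0 1 (2 * INR m * eps) j <> 0) /\
  (forall i, (1 <= i <= n)%nat ->
     Kiter n a eps m x0 i = orbit_form a x0 1 1 (2 * INR m * eps) i).
Proof.
  intros Hh. induction m as [|m IH]; intros Hdef.
  - split.
    + intros j _. unfold affine_v. simpl. lra.
    + intros i _. unfold orbit_form, affine_v. simpl. field.
  - destruct IH as [Hq HX]; [intros k Hk; apply Hdef; lia|].
    set (X := Kiter n a eps m x0) in HX.
    assert (HXh : H n a X = 0).
    { rewrite (H_orbit_form X _ _ _ R1_neq_R0 Hq HX), Hh. unfold Rdiv. ring. }
    destruct (K_orbit_form a x0 n eps _ _ _ X R1_neq_R0 Hq HX Hn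
                (Hdef m (Nat.lt_succ_diag_r m))) as [Hq' HK].
    rewrite HXh in Hq', HK.
    assert (Hc : 1 * (1 - eps * 0) * (1 + eps * 0) = 1) by ring.
    assert (Hal : 1 * (1 - eps * 0) = 1) by ring.
    assert (Hbe : 2 * INR m * eps * (1 - eps * 0) + 2 * eps * 1 / 1 = 2 * INR (S m) * eps).
    { rewrite S_INR. field. }
    rewrite Hal, Hbe in Hq'. rewrite Hc, Hal, Hbe in HK.
    split; assumption.
Qed.

End Iterates.

Theorem proposition3p4 (n : nat) (a : nat -> R) (eps : R) (x0 : nat -> R) (m : nat) :
  (exists j, (1 <= j <= n)%nat /\ a j <> 0) ->
  0 < eps ->
  (forall k, (k < m)%nat -> K_defined n a eps (Kiter n a eps k x0)) ->
  let h0 := H n a x0 in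
  (h0 <> 0 ->
     let rho := (1 + eps * h0) / (1 - eps * h0) in
     forall i, (1 <= i <= n)%nat ->
       Kiter n a eps m x0 i =
         x0 i * (rho ^ m * h0 ^ 2) /
         ((h0 + v a x0 (i - 1) * (rho ^ m - 1)) * (h0 + v a x0 i * (rho ^ m - 1)))) /\
  (h0 = 0 ->
     forall i, (1 <= i <= n)%nat ->
       Kiter n a eps m x0 i =
         x0 i * (1 / ((1 + 2 * INR m * eps * v a x0 (i - 1)) *
                      (1 + 2 * INR m * eps * v a x0 i)))).
Proof.
  intros [j [Hj _]] _ Hdef h0.
  assert (Hn : (1 <= n)%nat) by lia.
  split.
  - intros Hh rho_h i Hi.
    destruct (Kiter_orbit_form_nonzero n a eps x0 Hn h0 m eq_refl Hh Hdef) as [_ HK].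
    exact (HK i Hi).
  - intros Hh i Hi.
    destruct (Kiter_orbit_form_zero n a eps x0 Hn m Hh Hdef) as [_ HK].
    rewrite HK by exact Hi. unfold orbit_form, affine_v.
    rewrite !(Rmult_comm (v a x0 _)). unfold Rdiv. ring.
Qed.
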